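(* Let $K,L>0$, let $A(p,q)=(p^2q)^{1/3}$ and $A^\delta(p,q)=\operatorname{sgn}(q)\min\left(\lvert A(p,q)\rvert,K\lvert p\rvert,L\lvert q\rvert\right)$. Define $A^{\delta,+}(p,q)=A^\delta(p^+,q^+)$ and $A^{\delta,-}(p,q)=A^\delta(p^-,q^-)$. Then \[ -A^\delta(p,q)=A^{\delta,+}(\lvert p\rvert,-q)+A^{\delta,-}(-\lvert p\rvert,-q)\quad\text{for all }p,q\in\mathbb R, \] and $A^{\delta,+}\in ND^+(\mathbb R^2)$, $A^{\delta,-}\in ND^-(\mathbb R^2)$.
   Context: Real cube root; $\operatorname{sgn}(q)=q/\lvert q\rvert$ for $q\ne0$ and $\operatorname{sgn}(0)=0$; $x^+=\max(x,0)$, $x^-=\min(x,0)$. For $x,y\in\mathbb R^N$, $x\le y$ means componentwise; $F\in ND(\mathbb R^N)$ means $x\le y\Rightarrow F(x)\le F(y)$; $ND^+(\mathbb R^N)$ (resp. $ND^-(\mathbb R^N)$) are the nondecreasing functions with values in $[0,\infty)$ (resp. $(-\infty,0]$). *)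

From HB Require Import structures.
From mathcomp Require Import all_boot all_order all_algebra.
From mathcomp Require Import all_classical all_reals all_analysis.
Set Implicit Arguments. Unset Strict Implicit. Unset Printing Implicit Defensive.
Import Order.TTheory GRing.Theory Num.Theory.
Local Open Scope ring_scope.

Section Defs.
Variable R : realType.

(* real cube root: sgn(x) |x|^(1/3)  (powR 0 a = 0 for a <> 0) *)
Definition cbrt (x : R) : R := Num.sg x * powR `|x| (3%:R^-1).

Definition posp (x : R) : R := Num.max x 0.
Definition negp (x : R) : R := Num.min x 0.

Definition Afun (p q : R) : R := cbrt (p ^+ 2 * q).

Definition Adelta (K L p q : R) : R :=
  Num.sg q * Num.min `|Afun p q| (Num.min (K * `|p|) (L * `|q|)).

Definition Adelta_plus (K L p q : R) : R := Adelta K L (posp p) (posp q).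
Definition Adelta_minus (K L p q : R) : R := Adelta K L (negp p) (negp q).

Definition ND2 (F : R -> R -> R) : Prop :=
  forall p1 q1 p2 q2, p1 <= p2 -> q1 <= q2 -> F p1 q1 <= F p2 q2.
Definition ND2_plus (F : R -> R -> R) : Prop := ND2 F /\ forall p q, 0 <= F p q.
Definition ND2_minus (F : R -> R -> R) : Prop := ND2 F /\ forall p q, F p q <= 0.
End Defs.

From HB Require Import structures.
From mathcomp Require Import all_boot all_order all_algebra.
From mathcomp Require Import all_classical all_reals all_analysis.
Set Implicit Arguments. Unset Strict Implicit. Unset Printing Implicit Defensive.
Import Order.TTheory GRing.Theory Num.Theory.
Local Open Scope ring_scope.

(* A^delta(p, q) = sgn(q) M(|p|, |q|) with M(a, b) = min((a^2 b)^(1/3), K a, L b)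
   nonnegative and nondecreasing in a, b >= 0.  Hence A^delta is even in p, odd
   in q, and nondecreasing on the closed positive quadrant, and by the symmetry
   A^delta(p, q) = -A^delta(-p, -q) also on the closed negative one.  The
   decomposition holds because A^delta(p, 0) = 0 and one of q^+, q^- vanishes. *)

Section Adelta.
Variable R : realType.
Implicit Types K L p q x y : R.

Lemma normr_cbrt x : `|cbrt x| = powR `|x| 3%:R^-1.
Proof.
rewrite /cbrt normrM normr_sg (ger0_norm (powR_ge0 _ _)).
have [->|x_neq0] := eqVneq x 0; last by rewrite mul1r.
by rewrite normr0 mul0r powR0 // invr_eq0 pnatr_eq0.
Qed.

Lemma posp_ge0 x : 0 <= posp x.
Proof. by rewrite le_max lexx orbT. Qed.

Lemma negp_le0 x : negp x <= 0.
Proof. by rewrite ge_min lexx orbT. Qed.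

Lemma ler_posp x y : x <= y -> posp x <= posp y.
Proof. by move=> le_xy; rewrite le_max2. Qed.

Lemma ler_negp x y : x <= y -> negp x <= negp y.
Proof. by move=> le_xy; rewrite le_min2. Qed.

Definition Adelta_norm K L p q : R :=
  Num.min `|Afun p q| (Num.min (K * `|p|) (L * `|q|)).

Lemma AdeltaE K L p q : Adelta K L p q = Num.sg q * Adelta_norm K L p q.
Proof. by []. Qed.

Lemma normr_Afun p q : `|Afun p q| = powR (`|p| ^+ 2 * `|q|) 3%:R^-1.
Proof. by rewrite /Afun normr_cbrt normrM normrX. Qed.

Lemma eq_Adelta_norm K L p1 q1 p2 q2 : `|p1| = `|p2| -> `|q1| = `|q2| ->
  Adelta_norm K L p1 q1 = Adelta_norm K L p2 q2.
Proof. by move=> ep eq; rewrite /Adelta_norm !normr_Afun ep eq. Qed.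

Lemma AdeltaNl K L p q : Adelta K L (- p) q = Adelta K L p q.
Proof. by rewrite !AdeltaE (eq_Adelta_norm K L (normrN p) (erefl `|q|)). Qed.

Lemma AdeltaNr K L p q : Adelta K L p (- q) = - Adelta K L p q.
Proof. by rewrite !AdeltaE sgrN mulNr (eq_Adelta_norm K L (erefl `|p|) (normrN q)). Qed.

Lemma AdeltaNN K L p q : Adelta K L (- p) (- q) = - Adelta K L p q.
Proof. by rewrite AdeltaNl AdeltaNr. Qed.

Lemma Adelta_normr K L p q : Adelta K L `|p| q = Adelta K L p q.
Proof. by rewrite !AdeltaE (eq_Adelta_norm K L (normr_id p) (erefl `|q|)). Qed.

Lemma Adelta0r K L p : Adelta K L p 0 = 0.
Proof. by rewrite AdeltaE sgr0 mul0r. Qed.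

Lemma Adelta_posp_negp K L p q :
  Adelta K L p (posp q) + Adelta K L p (negp q) = Adelta K L p q.
Proof.
rewrite /posp /negp.
by have [q_ge0|q_lt0] := leP 0 q; rewrite Adelta0r ?addr0 ?add0r.
Qed.

Lemma oppr_Adelta_decomp K L p q :
  - Adelta K L p q = Adelta_plus K L `|p| (- q) + Adelta_minus K L (- `|p|) (- q).
Proof.
have posp_normr : posp `|p| = `|p| by rewrite /posp max_l.
have negp_Nnormr : negp (- `|p|) = - `|p| by rewrite /negp min_l ?oppr_le0.
rewrite /Adelta_plus /Adelta_minus posp_normr negp_Nnormr AdeltaNl !Adelta_normr.
by rewrite Adelta_posp_negp AdeltaNr.
Qed.

Section NonnegativeConstants.
Variables K L : R.
Hypotheses (K_ge0 : 0 <= K) (L_ge0 : 0 <= L).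

Lemma Adelta_norm_ge0 p q : 0 <= Adelta_norm K L p q.
Proof. by rewrite !le_min normr_ge0 !mulr_ge0. Qed.

Lemma ler_Adelta_norm p1 q1 p2 q2 : `|p1| <= `|p2| -> `|q1| <= `|q2| ->
  Adelta_norm K L p1 q1 <= Adelta_norm K L p2 q2.
Proof.
move=> le_p le_q; apply: le_min2; last by apply: le_min2; rewrite ler_wpM2l.
rewrite !normr_Afun ge0_ler_powR ?invr_ge0 ?ler0n ?nnegrE ?mulr_ge0 //.
by rewrite ler_pM ?lerXn2r ?nnegrE.
Qed.

Lemma Adelta_ge0 p q : 0 <= q -> 0 <= Adelta K L p q.
Proof. by move=> q_ge0; rewrite AdeltaE mulr_ge0 ?sgr_ge0 ?Adelta_norm_ge0. Qed.

Lemma Adelta_le0 p q : q <= 0 -> Adelta K L p q <= 0.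
Proof. by move=> q_le0; rewrite -[q]opprK AdeltaNr oppr_le0 Adelta_ge0 ?oppr_ge0. Qed.

Lemma ler_Adelta_ge0 p1 q1 p2 q2 : 0 <= p1 <= p2 -> 0 <= q1 <= q2 ->
  Adelta K L p1 q1 <= Adelta K L p2 q2.
Proof.
move=> /andP[p1_ge0 le_p] /andP[q1_ge0 le_q].
have [->|q1_neq0] := eqVneq q1 0.
  by rewrite Adelta0r Adelta_ge0 // (le_trans q1_ge0).
have q1_gt0 : 0 < q1 by rewrite lt_def q1_neq0.
have q2_gt0 : 0 < q2 by apply: lt_le_trans le_q.
rewrite !AdeltaE !gtr0_sg // !mul1r ler_Adelta_norm //.
  by rewrite !ger0_norm // (le_trans p1_ge0).
by rewrite !gtr0_norm.
Qed.

Lemma ler_Adelta_le0 p1 q1 p2 q2 : p1 <= p2 <= 0 -> q1 <= q2 <= 0 ->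
  Adelta K L p1 q1 <= Adelta K L p2 q2.
Proof.
move=> /andP[le_p p2_le0] /andP[le_q q2_le0].
rewrite -(opprK (Adelta K L p1 q1)) -(opprK (Adelta K L p2 q2)).
rewrite -(AdeltaNN K L p1 q1) -(AdeltaNN K L p2 q2) lerN2 ler_Adelta_ge0 //.
  by rewrite oppr_ge0 p2_le0 lerN2.
by rewrite oppr_ge0 q2_le0 lerN2.
Qed.

Lemma ND2_plus_Adelta_plus : ND2_plus (Adelta_plus K L).
Proof.
split=> [p1 q1 p2 q2 le_p le_q|p q]; last exact/Adelta_ge0/posp_ge0.
by rewrite ler_Adelta_ge0 // !posp_ge0 !ler_posp.
Qed.

Lemma ND2_minus_Adelta_minus : ND2_minus (Adelta_minus K L).
Proof.
split=> [p1 q1 p2 q2 le_p le_q|p q]; last exact/Adelta_le0/negp_le0.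
by rewrite ler_Adelta_le0 // !negp_le0 !ler_negp.
Qed.

End NonnegativeConstants.
End Adelta.

Theorem mainTheorem6 (R : realType) (K L : R) (hK : 0 < K) (hL : 0 < L) :
  (forall p q : R,
      - Adelta K L p q = Adelta_plus K L `|p| (- q) + Adelta_minus K L (- `|p|) (- q))
  /\ ND2_plus (Adelta_plus K L) /\ ND2_minus (Adelta_minus K L).
Proof.
split; first exact: oppr_Adelta_decomp.
by split; [apply: ND2_plus_Adelta_plus | apply: ND2_minus_Adelta_minus]; apply: ltW.
Qed.
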